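(* Let $q$ be a prime power and $t\ge 2$ an integer. Then $OCAN(t,q+1,t,q-1)\le q^{t}-2$.
   Context: For positive integers $m,s$, the RT poset $[m\times s]$ is the set $\{1,\ldots,ms\}$ partitioned into $m$ blocks $B_i=\{is+1,\ldots,(i+1)s\}$ ($i=0,\ldots,m-1$); each block is a chain under the usual order of the integers, and elements of different blocks are incomparable. An anti-ideal is the complement of an ideal (a down-closed set). Given an $N\times n$ array over an alphabet $V$ of size $v$, a set of $t$ columns is covered if in the $N\times t$ subarray formed by those columns every $t$-tuple over $V$ appears as a row at least once. For positive integers with $2\le t\le ms$, an ordered covering array $OCA(N;t,m,s,v)$ is an $N\times ms$ array over an alphabet of size $v$ with columns labeled by the elements of $[m\times s]$ such that for every anti-ideal $J$ of size $t$ the set of columns labeled by $J$ is covered; $OCAN(t,m,s,v)$ is the smallest $N$ for which an $OCA(N;t,m,s,v)$ exists. *)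

From mathcomp Require Import all_boot all_algebra matrix.
Set Implicit Arguments. Unset Strict Implicit. Unset Printing Implicit Defensive.

(* The RT poset [m x s]: its ms elements are represented 0-based by 'I_(m*s),
   the element k : 'I_(m*s) standing for k+1.  Block B_i consists of the k with
   k %/ s = i; inside a block the order is the integer order, and elements of
   different blocks are incomparable. *)
Definition rt_le (m s : nat) (x y : 'I_(m * s)) : bool :=
  (x %/ s == y %/ s) && (x <= y).

Definition rt_ideal (m s : nat) (I : {set 'I_(m * s)}) : bool :=
  [forall x, forall y, (rt_le x y && (y \in I)) ==> (x \in I)].

Definition rt_anti_ideal (m s : nat) (J : {set 'I_(m * s)}) : bool :=
  rt_ideal (~: J).

Definition covered (v N n : nat) (A : 'M['I_v]_(N, n)) (J : {set 'I_n}) : bool :=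
  [forall f : {ffun 'I_n -> 'I_v}, [exists r : 'I_N, [forall c in J, A r c == f c]]].

Definition is_OCA (t m s v N : nat) (A : 'M['I_v]_(N, m * s)) : bool :=
  [forall J : {set 'I_(m * s)}, (rt_anti_ideal J && (#|J| == t)) ==> covered A J].

Definition OCA_exists (t m s v N : nat) : bool :=
  [exists A : 'M['I_v]_(N, m * s), is_OCA t A].

(* The array whose rows are all the words over the alphabet is an OCA. *)
Lemma OCA_exists_some (t m s v : nat) : exists N, OCA_exists t m s v N.
Proof.
exists #|{ffun 'I_(m * s) -> 'I_v}|.
apply/existsP; exists (\matrix_(i, j) (enum_val i : {ffun 'I_(m * s) -> 'I_v}) j)%R.
apply/forallP => J; apply/implyP => _.
apply/forallP => f; apply/existsP; exists (enum_rank f).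
by apply/forall_inP => c _; rewrite mxE enum_rankK.
Qed.

Definition OCAN (t m s v : nat) : nat := ex_minn (OCA_exists_some t m s v).

(* Polynomials of degree < t over F_q, read through their Taylor coefficients
   at every point of the projective line, form an MDS code for the RT metric:
   if a polynomial vanishes on an anti-ideal of size t having a_x elements in
   the block of x, it has a root of multiplicity >= a_x at each finite x and
   degree < t - a_oo, hence it is zero.  Counting then shows that every pattern
   on such an anti-ideal is attained by exactly one polynomial, which gives an
   OCA(q^t; t, q+1, t, q).  Merging the symbols 0 and 1 makes the rows of the
   constant polynomials 0 and 1 redundant: a target pattern, lifted back with 0
   for the merged symbol, is attained by another row unless the lift is
   identically 0; in that case the two lifts carrying a single 1 at two
   different places are attained by two distinct rows other than 0, and at
   most one of them is the polynomial 1. *)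
From mathcomp Require Import all_boot all_algebra matrix.
From mathcomp Require Import qpoly finfield zify.
Set Implicit Arguments. Unset Strict Implicit. Unset Printing Implicit Defensive.
Import GRing.Theory.

Lemma OCAN_le (t m s v N : nat) : OCA_exists t m s v N -> OCAN t m s v <= N.
Proof. by rewrite /OCAN; case: ex_minnP => n _; apply. Qed.

Lemma OCA_exists_of_rows (t m s v : nat) (T : finType) (S : {set T})
    (row : T -> 'I_(m * s) -> 'I_v) :
  (forall J : {set 'I_(m * s)}, rt_anti_ideal J -> #|J| = t ->
     forall f : 'I_(m * s) -> 'I_v, exists2 x, x \in S & {in J, row x =1 f}) ->
  OCA_exists t m s v #|S|.
Proof.
move=> row_cover; apply/existsP; exists (\matrix_(r, k) row (enum_val r) k)%R.
apply/forallP => J; apply/implyP => /andP[aJ /eqP card_J]; apply/forallP => f.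
have [x xS agree] := row_cover J aJ card_J f.
apply/existsP; exists (enum_rank_in xS x); apply/forall_inP => k kJ.
by rewrite mxE enum_rankK_in // agree.
Qed.

Lemma card_le_interval (n lo hi : nat) (A : {set 'I_n}) :
  {in A, forall k : 'I_n, lo <= k < hi} -> #|A| <= hi - lo.
Proof.
move=> A_sub; rewrite cardE -(size_map val) -(size_iota lo (hi - lo)).
apply: uniq_leq_size => [|_ /mapP[k kA ->]].
  by rewrite (map_inj_uniq val_inj) enum_uniq.
rewrite mem_enum in kA; have /andP[lo_k k_hi] := A_sub k kA.
by rewrite mem_iota lo_k subnKC // (leq_trans lo_k (ltnW k_hi)).
Qed.

Lemma ord_mul_gt0r (m s : nat) (k : 'I_(m * s)) : 0 < s.
Proof. by have := leq_ltn_trans (leq0n k) (ltn_ord k); rewrite muln_gt0 => /andP[]. Qed.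

Lemma card_onto_of_agree_inj (T I V : finType) (word : T -> I -> V) (J : {set I}) :
    #|T| = #|V| ^ #|J| -> (forall x y, {in J, word x =1 word y} -> x = y) ->
  forall f : I -> V, exists x, {in J, word x =1 f}.
Proof.
move=> card_T agree_inj f.
pose restr x := [ffun i : 'I_#|J| => word x (enum_val i)].
have restr_inj : injective restr.
  move=> x y /ffunP restr_xy; apply: agree_inj => k kJ.
  by have := restr_xy (enum_rank_in kJ k); rewrite !ffunE enum_rankK_in.
have : [ffun i => f (enum_val i)] \in codom restr.
  by apply: inj_card_onto; rewrite // card_ffun card_ord card_T.
case/codomP => x /ffunP restr_x; exists x => k kJ.
by have := restr_x (enum_rank_in kJ k); rewrite !ffunE enum_rankK_in.
Qed.

Section RTPoset.
Variables m s : nat.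
Implicit Type J : {set 'I_(m * s)}.

Lemma rt_anti_ideal_up J (k k' : 'I_(m * s)) :
  rt_anti_ideal J -> k \in J -> k %/ s = k' %/ s -> k <= k' -> k' \in J.
Proof.
move=> /forallP aJ kJ same_block le_kk'; apply: contraTT kJ => k'NJ.
have /forallP/(_ k')/implyP := aJ k.
by rewrite /rt_le same_block eqxx le_kk' !in_setC k'NJ => /(_ isT).
Qed.

Definition block_card J (i : nat) : nat := #|[set k in J | k %/ s == i]|.

Lemma block_card_le J i : block_card J i <= #|J|.
Proof. by apply: subset_leq_card; apply/subsetP => k; rewrite inE => /andP[]. Qed.

Lemma sum_block_card J : \sum_(0 <= i < m) block_card J i = #|J|.
Proof.
have block_lt (k : 'I_(m * s)) : k %/ s < m by rewrite ltn_divLR ?(ord_mul_gt0r k).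
rewrite big_mkord -sum1_card (partition_big (fun k => Ordinal (block_lt k)) xpredT) //=.
apply: eq_bigr => i _; rewrite /block_card -sum1_card; apply: eq_bigl => k.
by rewrite inE -val_eqE.
Qed.

Lemma anti_ideal_block_top J i d : rt_anti_ideal J -> d < block_card J i ->
  exists2 k : 'I_(m * s), val k = i * s + (s.-1 - d) & k \in J.
Proof.
move=> aJ d_lt.
have /set0Pn[k' ] : [set k in J | k %/ s == i] != set0.
  by rewrite -card_gt0; exact: leq_ltn_trans d_lt.
rewrite inE => /andP[k'J /eqP k'_block].
have s_gt0 := ord_mul_gt0r k'.
have i_lt : i < m by rewrite -k'_block ltn_divLR.
have top_lt : i * s + (s.-1 - d) < m * s.
  have : i * s + s <= m * s by rewrite -mulSnr leq_mul2r i_lt orbT.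
  lia.
exists (Ordinal top_lt) => //; set k := Ordinal top_lt.
have k_block : k %/ s = i by rewrite /= divnMDl // divn_small ?addn0 //; lia.
apply/negPn/negP => kNJ; move: d_lt; apply/negP; rewrite -leqNgt.
suff : block_card J i <= (i * s + s) - (k.+1) by rewrite /=; lia.
apply: card_le_interval => k''; rewrite inE => /andP[k''J /eqP k''_block].
apply/andP; split.
  rewrite ltnNge; apply: contraNN kNJ => le_k; apply: rt_anti_ideal_up aJ k''J _ le_k.
  exact: etrans k''_block (esym k_block).
by rewrite -k''_block {1}(divn_eq k'' s) ltn_add2l ltn_pmod.
Qed.

End RTPoset.

Lemma merge_symbols (V : finType) (a b : V) : a != b ->
  exists (phi : V -> 'I_(#|V| - 1)) (psi : 'I_(#|V| - 1) -> V),
    [/\ cancel psi phi, phi b = phi a & forall y, psi y != b].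
Proof.
move=> neq_ab.
have aV : a \in [set~ b] by rewrite !inE.
have card_V : #|[set~ b]| = #|V| - 1 by rewrite cardsC1 subn1.
pose phi x := cast_ord card_V (enum_rank_in aV (if x == b then a else x)).
pose psi y := enum_val (cast_ord (esym card_V) y).
have psi_neq_b y : psi y != b.
  by have := enum_valP (cast_ord (esym card_V) y); rewrite !inE.
exists phi, psi; split=> [y||//]; last by rewrite /phi eqxx if_same.
by rewrite /phi (negbTE (psi_neq_b y)) enum_valK_in cast_ordKV.
Qed.

Section MergeSymbols.
Variables (T I : finType) (V : eqType) (V' : Type).
Variables (word : T -> I -> V) (a b : V) (phi : V -> V') (psi : V' -> V).
Hypotheses (neq_ab : a != b) (psiK : cancel psi phi) (phi_ba : phi b = phi a).
Hypothesis psi_neq_b : forall y, psi y != b.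
Variables x0 x1 : T.
Hypotheses (word_x0 : forall k, word x0 k = a) (word_x1 : forall k, word x1 k \in [:: a; b]).

Lemma merge_cover (J : {set I}) : 1 < #|J| ->
    (forall f : I -> V, exists x, {in J, word x =1 f}) ->
  forall g : I -> V', exists2 x, x \notin [:: x0; x1] & {in J, forall k, phi (word x k) = g k}.
Proof.
move=> J_gt1 word_onto g; pose tau k := psi (g k).
have [tau_a | ] := boolP [forall k in J, tau k == a]; last first.
  rewrite negb_forall_in => /exists_inP[k0 k0J tau_k0].
  have [x xE] := word_onto tau; exists x; last by move=> k kJ; rewrite xE //; exact: psiK.
  rewrite !inE negb_or; apply/andP; split; apply: contraNneq tau_k0 => x_eq.
    by rewrite -xE // x_eq word_x0.
  have := word_x1 k0; rewrite -x_eq xE // !inE (negbTE (psi_neq_b _)) orbF.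
  by move=> /eqP ->.
have [k1 [k2 [k1J k2J neq_k12]]] := card_gt1P J_gt1.
pose bump k0 k := if k == k0 then b else tau k.
have phi_bump k0 k : k \in J -> phi (bump k0 k) = g k.
  move=> kJ; rewrite /bump; case: eqP => _; last exact: psiK.
  rewrite phi_ba -(eqP (forall_inP tau_a k kJ)); exact: psiK.
have [y1 y1E] := word_onto (bump k1); have [y2 y2E] := word_onto (bump k2).
have neq_x0 k0 y : k0 \in J -> {in J, word y =1 bump k0} -> y != x0.
  move=> k0J yE; apply: contraNneq neq_ab => y_x0.
  by have := yE k0 k0J; rewrite y_x0 word_x0 /bump eqxx => ->.
have neq_y12 : y1 != y2.
  apply: contraNneq neq_ab => y12; have := y1E k2 k2J.
  rewrite y12 y2E // /bump eqxx [k2 == k1]eq_sym (negbTE neq_k12).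
  by rewrite (eqP (forall_inP tau_a k2 k2J)) => ->.
have [y1_x1 | y1_x1] := eqVneq y1 x1.
  exists y2; last by move=> k kJ; rewrite y2E // phi_bump.
  by rewrite !inE negb_or (neq_x0 k2) // -y1_x1 eq_sym.
exists y1; last by move=> k kJ; rewrite y1E // phi_bump.
by rewrite !inE negb_or (neq_x0 k1) // y1_x1.
Qed.

End MergeSymbols.

Section RootMultiplicities.
Variable F : fieldType.
Local Open Scope ring_scope.

Lemma prod_XsubC_mup_dvdp (s : seq F) (f : {poly F}) :
  uniq s -> \prod_(x <- s) ('X - x%:P) ^+ mup x f %| f.
Proof.
have [-> _ | f_neq0] := eqVneq f 0; first exact: dvdp0.
elim: s => [|x s IHs] /=; first by rewrite big_nil dvd1p.
case/andP => xNs /IHs dvd_s; rewrite big_cons Gauss_dvdp ?dvd_s -?mup_geq ?andbT //.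
rewrite coprimep_expl // coprimep_sym coprimep_XsubC /root horner_prod prodf_seq_neq0.
apply/allP => y ys; rewrite horner_exp hornerXsubC expf_neq0 // subr_eq0.
by apply: contraNneq xNs => ->.
Qed.

Lemma sum_mup_lt_size (s : seq F) (f : {poly F}) :
  uniq s -> f != 0 -> (\sum_(x <- s) mup x f < size f)%N.
Proof.
move=> s_uniq f_neq0; have := dvdp_leq f_neq0 (prod_XsubC_mup_dvdp f s_uniq).
rewrite size_prod_seq => [|x _]; last by rewrite expf_neq0 ?polyXsubC_eq0.
under eq_bigr do rewrite size_exp_XsubC -addn1.
by rewrite big_split /= sum1_size -addSn addnK.
Qed.

(* The d-th Taylor coefficient of f at x, i.e. the Hasse derivative f^`N(d).[x]. *)
Definition taylor_coef (f : {poly F}) (x : F) (d : nat) : F := (f \Po ('X + x%:P))`_d.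

Lemma taylor_coef_eq0_dvdp (f : {poly F}) x n :
  (forall d, (d < n)%N -> taylor_coef f x d = 0) -> ('X - x%:P) ^+ n %| f.
Proof.
move=> low_eq0; set g := f \Po ('X + x%:P).
have g_take : take_poly n g = 0.
  by apply/polyP => i; rewrite coef_take_poly coef0; case: ifP => // /low_eq0.
have gE : g = drop_poly n g * 'X^n by rewrite -{1}(poly_take_drop n g) g_take add0r.
rewrite -(comp_polyXaddC_K f x) -/g gE comp_polyM comp_Xn_poly.
exact: dvdp_mull.
Qed.

End RootMultiplicities.

Section RTCode.
Variables (F : finFieldType) (t : nat).
Local Notation q := #|F|.
Local Notation n := ((q + 1) * t).
Local Open Scope ring_scope.

Definition rt_point (i : nat) : F := nth 0 (enum F) i.

(* The Rosenbloom-Tsfasman analogue of a Reed-Solomon codeword: block i < q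
   lists the Taylor coefficients of f at the i-th element of F, lowest order
   last (at the top of the block), and block q, the point at infinity, lists
   the coefficients of f. *)
Definition rt_coord (f : {poly F}) (k : nat) : F :=
  if (k %/ t < q)%N then taylor_coef f (rt_point (k %/ t)) (t.-1 - k %% t)
  else f`_(k %% t).

Lemma rt_coord_block f i r : (r < t)%N ->
  rt_coord f (i * t + r) =
    if (i < q)%N then taylor_coef f (rt_point i) (t.-1 - r) else f`_r.
Proof.
move=> r_lt; have t_gt0 := leq_ltn_trans (leq0n r) r_lt.
by rewrite /rt_coord divnMDl // divn_small // addn0 modnMDl modn_small.
Qed.

Lemma rt_coordB f g k : rt_coord (f - g) k = rt_coord f k - rt_coord g k.
Proof. by rewrite /rt_coord /taylor_coef; case: ifP; rewrite ?comp_polyB coefB. Qed.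

Lemma rt_coord0 k : rt_coord 0 k = 0.
Proof. by rewrite /rt_coord /taylor_coef comp_poly0 !coef0 if_same. Qed.

Lemma rt_coord1 k : rt_coord 1 k \in [:: 0; 1].
Proof.
rewrite /rt_coord /taylor_coef -polyC1 comp_polyC.
by case: ifP => _; rewrite coefC; case: ifP => _; rewrite !inE eqxx ?orbT.
Qed.

Lemma rt_coord_eq0_on_anti_ideal (J : {set 'I_n}) (f : {poly F}) :
    rt_anti_ideal J -> #|J| = t -> (size f <= t)%N ->
  {in J, forall k : 'I_n, rt_coord f k = 0} -> f = 0.
Proof.
move=> aJ card_J size_f f_J; apply/eqP; apply: contraT => f_neq0.
pose a := block_card J.
have top i d : (d < a i)%N -> rt_coord f (i * t + (t.-1 - d)) = 0.
  by move=> /(anti_ideal_block_top aJ)[k <-]; exact: f_J.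
have a_lt_t i d : (d < a i)%N -> (d < t)%N.
  by move=> d_lt; rewrite -card_J; exact: leq_trans d_lt (block_card_le _ _).
have a_le_mup i : (i < q)%N -> (a i <= mup (rt_point i) f)%N.
  move=> i_lt; rewrite mup_geq //; apply: taylor_coef_eq0_dvdp => d d_lt.
  have d_t := a_lt_t i d d_lt.
  have := top i d d_lt; rewrite rt_coord_block ?i_lt; last by lia.
  by rewrite (_ : t.-1 - (t.-1 - d) = d)%N //; lia.
have size_f_le : (size f <= t - a q)%N.
  apply/leq_sizeP => j j_ge; have [j_lt|] := ltnP j t; last exact: leq_sizeP.
  have := top q (t.-1 - j)%N ltac:(lia).
  by rewrite (_ : t.-1 - (t.-1 - j) = j)%N ?rt_coord_block ?ltnn //; lia.
have sum_a : (\sum_(0 <= i < q) a i + a q = t)%N.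
  by rewrite -card_J -(sum_block_card J) -/a addn1 big_nat_recr.
have sum_a_le : (\sum_(0 <= i < q) a i <= \sum_(0 <= i < q) mup (rt_point i) f)%N.
  by rewrite !big_mkord; apply: leq_sum => i _; exact: a_le_mup.
have : (\sum_(0 <= i < q) mup (rt_point i) f < size f)%N.
  rewrite cardE -(big_nth 0 xpredT (fun x => mup x f)).
  exact: sum_mup_lt_size (enum_uniq _) f_neq0.
lia.
Qed.

Lemma rt_code_interpolation (J : {set 'I_n}) : rt_anti_ideal J -> #|J| = t ->
  forall tau : 'I_n -> F, exists p : {poly_t F}, {in J, forall k : 'I_n, rt_coord p k = tau k}.
Proof.
move=> aJ card_J; apply: card_onto_of_agree_inj; first by rewrite card_npoly card_J.
move=> p p' agree; apply: val_inj; apply/eqP; rewrite -subr_eq0; apply/eqP.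
apply: (rt_coord_eq0_on_anti_ideal aJ card_J).
  by rewrite (leq_trans (size_polyD _ _)) // size_polyN geq_max !size_npoly.
by move=> k kJ; rewrite rt_coordB agree // subrr.
Qed.

End RTCode.

Lemma OCA_exists_rt_code (F : finFieldType) (t : nat) :
  1 < t -> OCA_exists t (#|F| + 1) t (#|F| - 1) (#|F| ^ t - 2).
Proof.
move=> t_gt1.
have neq01 : (0 : F)%R != 1%R by rewrite eq_sym oner_neq0.
have [phi [psi [psiK phi10 psi_neq1]]] := merge_symbols neq01.
pose one : {poly_t F} := npolyp t 1.
have one_val : one = 1%R :> {poly F} by rewrite npolypK // size_poly1; lia.
have zero_neq_one : 0%R != one by rewrite -val_eqE /= one_val eq_sym oner_neq0.
pose S := ~: [set 0%R; one].
have <- : #|S| = #|F| ^ t - 2.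
  have := cardsC [set 0%R; one]; rewrite cards2 zero_neq_one card_npoly => <-.
  by rewrite addKn.
apply: (@OCA_exists_of_rows _ _ _ _ _ S (fun p k => phi (rt_coord t p k))) => J aJ card_J g.
have word0 (k : 'I_((#|F| + 1) * t)) : rt_coord t (0 : {poly_t F}) k = 0%R := rt_coord0 F t k.
have word1 (k : 'I_((#|F| + 1) * t)) : rt_coord t one k \in [:: 0%R; 1%R].
  by rewrite one_val; exact: rt_coord1.
have J_gt1 : 1 < #|J| by rewrite card_J.
have [p pS agree] :=
  merge_cover neq01 psiK phi10 psi_neq1 word0 word1 J_gt1 (rt_code_interpolation aJ card_J) g.
by exists p; rewrite // !inE in pS *.
Qed.

Theorem corollary3 (q t : nat) :
  (exists p k : nat, [/\ prime p, 0 < k & q = p ^ k]) ->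
  2 <= t ->
  OCAN t (q + 1) t (q - 1) <= q ^ t - 2.
Proof.
move=> [p [k [p_prime k_gt0 ->]]] t_ge2.
have [F _ card_F] := pPrimePowerField p_prime k_gt0.
by apply: OCAN_le; rewrite -card_F; exact: OCA_exists_rt_code.
Qed.
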